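(* Consider the scheduler $\texttt{UNK}$ described in the context, run on a task arrival process $\mathcal{T}$ such that, at every time from time $0$ until $\texttt{UNK}$ completes its final task, $\texttt{UNK}$ has at least one alive task. Then the total measure of times in this period at which $\texttt{UNK}$ is unsaturated is at most half the length of the period (i.e., at most half of $\texttt{UNK}$'s awake time).
   Context: Serial-parallel scheduling problem: $p$ identical processors; a task arrival process is a finite set of tasks $\tau_i=(\sigma_i,\pi_i,t_i)$ with arrival time $t_i\ge 0$, serial work $\sigma_i$, parallel work $\pi_i$, $1\le\pi_i/\sigma_i\le p$. A task runs either as a serial job (work $\sigma_i$, at most one processor at a time) or as a parallel job (work $\pi_i$, any number of processors, rate equal to number of processors); the choice is irrevocable once the task is started; time is continuous and preemption is allowed. A task is alive from arrival until completion; awake time is the measure of times with an alive task. The scheduler $\texttt{UNK}$: whenever there are idle processors, $\texttt{UNK}$ takes any arrived but not-yet-started task $\tau_i$ and, if $\tau_i$ arrived more than $\sigma_i$ time ago, starts its serial job; otherwise it starts its parallel job. At each time $\texttt{UNK}$ allocates one processor to each of the (at most $p$) running serial jobs; at most one parallel job runs at a time, and it receives all processors not used by serial jobs. $\texttt{UNK}$ is saturated at a time if all $p$ processors are in use, and unsaturated otherwise. *)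

From HB Require Import structures.
From mathcomp Require Import all_boot all_order all_algebra.
From mathcomp Require Import all_classical all_reals all_analysis.
Set Implicit Arguments. Unset Strict Implicit. Unset Printing Implicit Defensive.
Import Order.TTheory GRing.Theory Num.Theory.
Local Open Scope classical_set_scope.
Local Open Scope ring_scope.

(* A task arrival process with n tasks on p processors:
   task i has arrival time arr i, serial work sig i, parallel work pw i. *)
Definition task_process (R : realType) (p n : nat)
  (arr sig pw : 'I_n -> R) : Prop :=
  forall i, 0 <= arr i /\ 0 < sig i /\ sig i <= pw i /\ pw i <= p%:R * sig i.

Section Exec.
Variables (R : realType) (p n : nat).
(* An execution: start time st i, mode ser i (true = serial job,
   false = parallel job), completion time comp i. *)
Variables (st comp : 'I_n -> R) (ser : 'I_n -> bool).

Definition running (i : 'I_n) (t : R) : bool := (st i <= t) && (t < comp i).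

Definition nser (t : R) : nat := #|[set i | ser i && running i t]|.

Definition par_running (t : R) : bool := [exists i, ~~ ser i && running i t].

(* number of processors in use at time t: one per serial job, and the
   running parallel job (if any) gets all remaining processors *)
Definition busy (t : R) : nat := if par_running t then p else nser t.

Definition saturated (t : R) : Prop := busy t = p.
End Exec.

Definition UNK_run (R : realType) (p n : nat) (arr sig pw : 'I_n -> R)
  (st comp : 'I_n -> R) (ser : 'I_n -> bool) : Prop :=
      (forall i, arr i <= st i /\ ser i = (st i - arr i > sig i)) /\
      (* serial jobs run on one processor from start to completion *)
      (forall i, ser i -> comp i = st i + sig i) /\
      (forall t, (nser st comp ser t <= p)%N) /\
      (forall i j t, ~~ ser i -> ~~ ser j -> running st comp i t ->
        running st comp j t -> i = j) /\
      (* a parallel job starts only when processors are idle, receives all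
         processors not used by serial jobs, and completes exactly when its
         parallel work is done *)
      (forall i, ~~ ser i ->
        [/\ st i < comp i, (nser st comp ser (st i) < p)%N &
            (\int[lebesgue_measure]_(t in `[st i, comp i[)
               ((p%:R - (nser st comp ser t)%:R : R)%:E) = (pw i)%:E)%E]) /\
      (forall i j, ~~ ser i -> ser j -> ~ (st i < st j < comp i)) /\
      (forall t, (exists i, arr i <= t < st i) -> saturated p st comp ser t).

Definition makespan (R : realType) (n : nat) (comp : 'I_n -> R) : R :=
  \big[Num.max/0]_(i < n) comp i.

From HB Require Import structures.
From mathcomp Require Import all_boot all_order all_algebra.
From mathcomp Require Import all_classical all_reals all_analysis.
From mathcomp Require Import lra.
Set Implicit Arguments.
Unset Strict Implicit.
Unset Printing Implicit Defensive.
Import Order.TTheory GRing.Theory Num.Theory.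
Local Open Scope classical_set_scope.
Local Open Scope ring_scope.

(* Every unsaturated instant t is covered by a running serial job j, and the
   whole waiting gap [arr j, st j) of such a job is saturated and longer than
   its run [st j, comp j).  Among the serial jobs started before x take the
   one, j, completing last: every unsaturated instant of [arr j, x) lies in
   its run, so |[0, x) /\ unsaturated| <= arr j / 2 + |run of j| <= x / 2,
   by strong induction on the number of arrivals before x. *)

(* The sets below need not be measurable, so we use that
   [lebesgue_measure] is the Lebesgue outer measure on all of [set R]. *)
Lemma le_lebesgue_measure (R : realType) (A B : set R) :
  A `<=` B -> (lebesgue_measure A <= lebesgue_measure B)%E.
Proof. exact: (le_outer_measure (mu_ext (wlength (@idfun R)))). Qed.

Lemma lebesgue_measureU2 (R : realType) (A B : set R) :
  (lebesgue_measure (A `|` B) <= lebesgue_measure A + lebesgue_measure B)%E.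
Proof. exact: (outer_measureU2 (mu_ext (wlength (@idfun R)))). Qed.

Section Charging.
Variables (R : realType) (I : finType) (P : pred I) (a s c : I -> R).
Variables (U : set R) (M : R).
Hypothesis a_ge0 : forall j, P j -> 0 <= a j.
Hypothesis s_lt_c : forall j, P j -> s j < c j.
Hypothesis run_lt_wait : forall j, P j -> c j - s j < s j - a j.
Hypothesis notU_waiting : forall j t, P j -> a j <= t < s j -> ~ U t.
Hypothesis U_covered :
  forall t, 0 <= t < M -> U t -> exists2 j, P j & s j <= t < c j.

Let V (x : R) : set R := `[0, x[ `&` U.

Lemma charging_set0 x :
  x <= M -> (forall j, P j -> x <= s j) -> V x = set0.
Proof.
move=> xM s_ge; apply/seteqP; split => // t [/=]; rewrite in_itv/=.
move=> /andP[t0 tx] Ut.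
have [|j Pj /andP[sjt _]] := @U_covered t _ Ut.
  by rewrite t0 (lt_le_trans tx xM).
by have := s_ge j Pj; rewrite leNgt (le_lt_trans sjt tx).
Qed.

Lemma charging_subset x j :
  x <= M -> P j -> s j < x ->
  (forall k, P k -> s k < x -> c k <= c j) ->
  V x `<=` V (a j) `|` `[s j, Num.min (c j) x[.
Proof.
move=> xM Pj sjx c_max t [/=]; rewrite in_itv/= => /andP[t0 tx] Ut.
have [ta|ajt] := ltP t (a j); first by left; split; rewrite //= in_itv/= t0.
right; rewrite /= in_itv/= lt_min tx andbT.
have sjt : s j <= t.
  rewrite leNgt; apply/negP => ts.
  by apply: (notU_waiting Pj _ Ut); rewrite ajt.
have [|k Pk /andP[skt tck]] := @U_covered t _ Ut.
  by rewrite t0 (lt_le_trans tx xM).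
by rewrite sjt (lt_le_trans tck (c_max k Pk (le_lt_trans skt tx))).
Qed.

Lemma charging_step x j :
  x <= M -> P j -> s j < x ->
  (forall k, P k -> s k < x -> c k <= c j) ->
  (lebesgue_measure (V (a j)) <= (a j / 2)%:E)%E ->
  (lebesgue_measure (V x) <= (x / 2)%:E)%E.
Proof.
move=> xM Pj sjx c_max IH.
apply: (le_trans (le_lebesgue_measure (charging_subset xM Pj sjx c_max))).
apply: (le_trans (lebesgue_measureU2 _ _)).
have := run_lt_wait Pj; have := s_lt_c Pj.
have mx : Num.min (c j) x <= x by rewrite ge_min lexx orbT.
have mc : Num.min (c j) x <= c j by rewrite ge_min lexx.
rewrite lebesgue_measure_itv/= lte_fin lt_min sjx andbT => scj short_run.
rewrite scj -EFinD; apply: (le_trans (leeD IH (lexx _))).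
by rewrite -EFinD lee_fin; lra.
Qed.

Lemma charging_reduce x : 0 <= x <= M ->
  (lebesgue_measure (V x) <= (x / 2)%:E)%E \/
  exists2 j, P j && (a j < x) &
    ((lebesgue_measure (V (a j)) <= (a j / 2)%:E)%E ->
     (lebesgue_measure (V x) <= (x / 2)%:E)%E).
Proof.
move=> /andP[x0 xM].
case: (pickP (fun j => P j && (s j < x))) => [j0 Pj0|none]; last first.
  left; rewrite charging_set0 ?measure0 ?lee_fin ?divr_ge0 // => j Pj.
  by have := none j; rewrite Pj /= leNgt => ->.
have [j /andP[Pj sjx] c_max] :=
  @arg_maxP _ _ _ j0 (fun j => P j && (s j < x)) c Pj0.
right; exists j.
  by rewrite Pj /=; have := run_lt_wait Pj; have := s_lt_c Pj; lra.
apply: (charging_step xM Pj sjx) => k Pk skx.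
by apply: c_max; rewrite Pk skx.
Qed.

Lemma charging_bound x : 0 <= x <= M ->
  (lebesgue_measure (`[0%R, x[ `&` U) <= (x / 2)%:E)%E.
Proof.
have [k] := ubnP #|[set j | P j && (a j < x)%R]%SET|.
elim: k x => // k IHk x /ltnSE card_le x_range.
have [//|[j /andP[Pj ajx] IH_to_x]] := charging_reduce x_range.
apply/IH_to_x/IHk; last first.
  by rewrite a_ge0 // ltW // (lt_le_trans ajx); case/andP: x_range.
apply: leq_trans card_le; apply: proper_card; apply/properP; split.
  by apply/fintype.subsetP => i; rewrite !inE => /andP[-> /lt_trans]; apply.
by exists j; rewrite !inE ?Pj ?ajx ?ltxx.
Qed.

Lemma charging_bound_closed : 0 <= M ->
  (lebesgue_measure ([set t | (0 <= t <= M)%R] `&` U) <= (M / 2)%:E)%E.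
Proof.
move=> M0.
have sub : [set t | 0 <= t <= M] `&` U `<=` (`[0%R, M[ `&` U) `|` [set M].
  move=> t [/= /andP[t0 tM] Ut]; have [tltM|Mlet] := ltP t M.
    by left; split; rewrite //= in_itv/= t0.
  by right; apply/eqP; rewrite eq_le tM Mlet.
apply: (le_trans (le_lebesgue_measure sub)).
apply: (le_trans (lebesgue_measureU2 _ _)).
by rewrite lebesgue_measure_set1 adde0 charging_bound // M0 lexx.
Qed.

End Charging.

Lemma makespan_ge0 (R : realType) (n : nat) (comp : 'I_n -> R) :
  0 <= makespan comp.
Proof.
by rewrite /makespan; elim/big_rec: _ => // j y _ y0; rewrite le_max y0 orbT.
Qed.

Section UNKRun.
Variables (R : realType) (p n : nat) (arr sig pw st comp : 'I_n -> R).
Variable ser : 'I_n -> bool.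
Hypothesis tasks : task_process p arr sig pw.
Hypothesis run : UNK_run p arr sig pw st comp ser.

Lemma UNK_serial_st_lt_comp j : ser j -> st j < comp j.
Proof.
move=> serj; have [_ [sig0 _]] := tasks j.
have [_ [serial_comp _]] := run.
by rewrite serial_comp // ltrDl.
Qed.

Lemma UNK_serial_run_lt_wait j : ser j -> comp j - st j < st j - arr j.
Proof.
move=> serj; have [/(_ j)[_ ser_rule] [serial_comp _]] := run.
by rewrite serial_comp // addrAC subrr add0r -ser_rule.
Qed.

Lemma UNK_waiting_saturated j t :
  arr j <= t < st j -> saturated p st comp ser t.
Proof.
have [_ [_ [_ [_ [_ [_ greedy]]]]]] := run.
by move=> waiting; apply: greedy; exists j.
Qed.

Lemma UNK_unsaturated_serial t : (exists i, arr i <= t < comp i) ->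
  ~ saturated p st comp ser t -> exists2 j, ser j & st j <= t < comp j.
Proof.
move=> [j /andP[ajt tcj]] unsat.
have sjt : st j <= t.
  rewrite leNgt; apply/negP => tsj; apply: unsat.
  by apply: (@UNK_waiting_saturated j); rewrite ajt.
exists j; last by rewrite sjt tcj.
apply/negPn/negP => parj; apply: unsat.
rewrite /saturated /busy ifT //; apply/existsP.
by exists j; rewrite parj /running sjt tcj.
Qed.

End UNKRun.

Theorem lemma5p2 (R : realType) (p n : nat) (arr sig pw : 'I_n -> R)
  (st comp : 'I_n -> R) (ser : 'I_n -> bool) :
  (0 < p)%N ->
  task_process p arr sig pw ->
  UNK_run p arr sig pw st comp ser ->
  (forall t, 0 <= t < makespan comp -> exists i, arr i <= t < comp i) ->
  (lebesgue_measure ([set t : R | (0 <= t <= makespan comp)%R] `&`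
                     [set t | ~ saturated p st comp ser t])
    <= (makespan comp / 2)%:E)%E.
Proof.
move=> _ tasks run alive.
apply: (@charging_bound_closed _ _ ser arr st comp).
- by move=> j _; have [] := tasks j.
- exact: UNK_serial_st_lt_comp.
- exact: UNK_serial_run_lt_wait run.
- by move=> j t _ /(UNK_waiting_saturated run) sat /(_ sat).
- move=> t /alive alive_t unsat.
  exact: (UNK_unsaturated_serial run alive_t unsat).
- exact: makespan_ge0.
Qed.
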